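(* Let $\lambda_1\neq\lambda_2$ be real numbers, $n_1,n_2$ positive integers, $n=n_1+n_2$, and let $\mathcal{F}$ and $\mathcal{D}$ be finite sets of real numbers with $\{\lambda_1,\lambda_2\}\cap\mathcal{F}=\emptyset$. Then there exists $A\in\mathcal{S}(K_n)$ with spectrum $\{\lambda_1^{(n_1)},\lambda_2^{(n_2)}\}$ such that for every vertex $v$ of $K_n$ the matrix $A(v)$ has no eigenvalue in $\mathcal{F}$, and no diagonal entry of $A$ lies in $\mathcal{D}$.
   Context: $\mathcal{S}(K_n)$ is the set of $n\times n$ real symmetric matrices all of whose off-diagonal entries are nonzero. $A(v)$ denotes the submatrix of $A$ obtained by deleting row and column $v$. $\lambda^{(k)}$ denotes $k$ copies of $\lambda$. *)

From HB Require Import structures.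
From mathcomp Require Import all_boot all_order all_algebra.
From mathcomp Require Import reals.
Set Implicit Arguments. Unset Strict Implicit. Unset Printing Implicit Defensive.
Import Order.TTheory GRing.Theory Num.Theory.
Local Open Scope ring_scope.

Definition SKn (R : realType) (n : nat) (A : 'M[R]_n) : Prop :=
  A^T = A /\ (forall i j : 'I_n, i != j -> A i j != 0).

Definition del_vertex (R : realType) (n : nat) (A : 'M[R]_n) (v : 'I_n) : 'M[R]_n.-1 :=
  \matrix_(i < n.-1, j < n.-1) A (lift v i) (lift v j).

From HB Require Import structures.
From mathcomp Require Import all_boot all_order all_algebra.
From mathcomp Require Import reals.
From mathcomp Require Import ring lra.
Import Order.TTheory GRing.Theory Num.Theory.
Local Open Scope ring_scope.

(* Let H be the Householder reflection along w = (1,...,1,t,...,t) and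
   A = H diag(l1^(n1), l2^(n2)) H.  Then A is symmetric with the prescribed
   spectrum and A^2 = (l1 + l2) A - l1 l2.  Extending an eigenvector of A(v)
   by 0 at v shows that this quadratic relation forces every eigenvalue of
   A(v) to be l1, l2 or l1 + l2 - A_vv.  The entries of A are explicit in t:
   for t != 0 the off-diagonal ones vanish only if n2 t^2 = n1, and the
   diagonal ones are l_k + c_k (t / (n1 + n2 t^2))^2 with c_k != 0, so a small
   t > 0 keeps the diagonal off the finite set D u {l1 + l2 - f | f in F}. *)

Lemma del_vertexE (R : realType) n (A : 'M[R]_n) v :
  del_vertex A v = row' v (col' v A).
Proof. by apply/matrixP => i j; rewrite !mxE. Qed.

Lemma eigenvalue_row'_col' {F : fieldType} {n} {A : 'M[F]_n} {a b mu : F} {v} :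
  A *m A = (a + b) *: A - (a * b)%:M ->
  eigenvalue (row' v (col' v A)) mu -> [|| mu == a, mu == b | mu == a + b - A v v].
Proof.
move=> AA /eigenvalueP[y yA y_neq0].
pose z : 'rV[F]_n := \row_j (if unlift v j is Some k then y 0 k else 0).
have z_lift k : z 0 (lift v k) = y 0 k by rewrite mxE liftK.
have z_v : z 0 v = 0 by rewrite mxE unlift_none.
have z_neq0 : z != 0.
  apply: contra y_neq0 => /eqP z0; apply/eqP/rowP => k.
  by rewrite -z_lift z0 !mxE.
clearbody z; set c := (z *m A) 0 v.
have zA : z *m A = mu *: z + c *: delta_mx 0 v.
  apply/rowP => j; rewrite !mxE; case: (unliftP v j) => [k ->| ->].
    rewrite z_lift eq_sym (negPf (neq_lift v k)) andbF mulr0 addr0.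
    rewrite (bigD1_ord v) //= z_v mul0r add0r.
    have := congr1 (fun M : 'rV_ _ => M 0 k) yA; rewrite !mxE => <-.
    by apply: eq_bigr => i _; rewrite z_lift !mxE.
  by rewrite z_v mulr0 add0r !eqxx mulr1 /c mxE.
have zAA : mu *: (z *m A) + c *: row v A = (a + b) *: (z *m A) - (a * b) *: z.
  transitivity (z *m (A *m A)); last by rewrite AA mulmxBr -scalemxAr mul_mx_scalar.
  by rewrite mulmxA [in RHS]zA mulmxDl -!scalemxAl rowE.
have c_mu : c * (mu + A v v - (a + b)) = 0.
  have := congr1 (fun M : 'rV_ _ => M 0 v) zAA.
  rewrite zA !mxE z_v !eqxx /= !(mulr0, add0r, mulr1, subr0) => E.
  by rewrite mulrBr mulrDr (mulrC c mu) (mulrC c (a + b)) E subrr.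
have [c0 | mu_eq] : c = 0 \/ mu + A v v = a + b.
  by move/eqP: c_mu; rewrite mulf_eq0 subr_eq0 => /orP[] /eqP; [left | right].
- move: zAA; rewrite zA c0 !scale0r !addr0 => /eqP; rewrite -subr_eq0.
  have -> : mu *: (mu *: z) - ((a + b) *: (mu *: z) - (a * b) *: z)
          = ((mu - a) * (mu - b)) *: z.
    by apply/rowP => j; rewrite !mxE; ring.
  rewrite scaler_eq0 (negPf z_neq0) orbF mulf_eq0 !subr_eq0.
  by case/orP => ->; rewrite ?orbT.
- by rewrite [mu == a + b - _]eq_sym subr_eq mu_eq eqxx !orbT.
Qed.

Lemma char_poly_conj (R : comNzRingType) n (P Q A : 'M[R]_n) :
  P *m Q = 1%:M -> char_poly (P *m A *m Q) = char_poly A.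
Proof.
move=> PQ; pose pP := map_mx polyC P; pose pQ := map_mx polyC Q.
have pPQ : pP *m pQ = 1%:M by rewrite -map_mxM PQ map_mx1.
rewrite /char_poly; have -> : char_poly_mx (P *m A *m Q) = pP *m char_poly_mx A *m pQ.
  by rewrite /char_poly_mx mulmxBr mulmxBl mul_mx_scalar -scalemxAl pPQ scalemx1 !map_mxM.
by rewrite !det_mulmx mulrAC -det_mulmx pPQ det1 mul1r.
Qed.

Lemma conj_invol_quadratic (R : comNzRingType) n (H M : 'M[R]_n) (a b : R) :
  H *m H = 1%:M -> M *m M = (a + b) *: M - (a * b)%:M ->
  let A := H *m M *m H in A *m A = (a + b) *: A - (a * b)%:M.
Proof.
move=> HH MM A; rewrite /A !mulmxA -(mulmxA (H *m M) H H) HH mulmx1 -(mulmxA H) MM.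
by rewrite mulmxBr mulmxBl -scalemxAr -scalemxAl mul_mx_scalar -scalemxAl HH scalemx1.
Qed.

Lemma diag_mx_quadratic (R : comNzRingType) n (d : 'rV[R]_n) (a b : R) :
  (forall i, d 0 i = a \/ d 0 i = b) ->
  diag_mx d *m diag_mx d = (a + b) *: diag_mx d - (a * b)%:M.
Proof.
move=> dab; apply/matrixP => i j; rewrite mul_diag_mx !mxE.
case: eqP => _; rewrite ?mulr1n ?mulr0n ?mulr0 ?subr0 //.
by case: (dab i) => ->; ring.
Qed.

Section Householder.
Variables (F : fieldType) (n : nat) (w : 'rV[F]_n).

Definition householder := 1%:M - (2 / (w *m w^T) 0 0) *: (w^T *m w).

Lemma tr_householder : householder^T = householder.
Proof. by rewrite linearB /= linearZ /= trmx1 trmx_mul trmxK. Qed.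

Lemma householderK : (w *m w^T) 0 0 != 0 -> householder *m householder = 1%:M.
Proof.
move=> s_neq0; set s := (w *m w^T) 0 0.
have WW : (w^T *m w) *m (w^T *m w) = s *: (w^T *m w).
  by rewrite mulmxA -(mulmxA w^T) [w *m w^T]mx11_scalar mul_mx_scalar -scalemxAl.
rewrite mulmxBl !mulmxBr mul1mx mulmx1 -!scalemxAl -!scalemxAr WW !scalerA mul1mx.
have -> : 2 / s * (2 / s) * s = 2 / s + 2 / s by field.
by rewrite scalerDl opprB addrK subrK.
Qed.

Lemma householder_conj_diagE (d : 'rV[F]_n) i j :
  let k := 2 / (w *m w^T) 0 0 in
  (householder *m diag_mx d *m householder) i j =
  (i == j)%:R * d 0 i
  + w 0 i * w 0 j * (k ^+ 2 * \sum_l w 0 l ^+ 2 * d 0 l - k * (d 0 i + d 0 j)).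
Proof.
move=> k; rewrite mul_mx_diag mxE.
have H_E i' j' : householder i' j' = (i' == j')%:R - k * (w 0 i' * w 0 j').
  by rewrite /householder -/k !mxE big_ord1 !mxE.
under eq_bigr => l _ do rewrite mxE !H_E.
transitivity (\sum_l ((i == l)%:R * (d 0 l * (l == j)%:R - k * d 0 l * w 0 l * w 0 j)
   + (- k * w 0 i) * ((l == j)%:R * (w 0 l * d 0 l))
   + (k ^+ 2 * w 0 i * w 0 j) * (w 0 l ^+ 2 * d 0 l))).
  by apply: eq_bigr => l _; ring.
rewrite !big_split /= -!mulr_sumr.
rewrite (bigD1 i) //= eqxx mul1r big1 ?addr0; last first.
  by move=> l /negPf; rewrite eq_sym => ->; rewrite mul0r.
rewrite (bigD1 j) //= eqxx mul1r big1 ?addr0; last first.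
  by move=> l /negPf ->; rewrite mul0r.
by rewrite eq_sym; ring.
Qed.

End Householder.

Arguments householder {F n} w.

Lemma sum_split_const {R : pzSemiRingType} {m n} (f : 'I_(m + n) -> R) a b :
  (forall i, f (lshift n i) = a) -> (forall i, f (rshift m i) = b) ->
  \sum_i f i = m%:R * a + n%:R * b.
Proof.
move=> fl fr; rewrite big_split_ord /=.
under eq_bigr do rewrite fl; under [X in _ + X]eq_bigr do rewrite fr.
by rewrite !sumr_const !card_ord !mulr_natl.
Qed.

Lemma exists_pos_notin {R : realFieldType} (B : seq R) :
  exists2 c : R, 0 < c & forall r, 0 < r -> r <= c -> r \notin B.
Proof.
elim: B => [|b B [c c_gt0 cB]]; first by exists 1.
have [b0 | b_le0] := ltrP 0 b; last first.
  by exists c => // r r0 rc; rewrite inE negb_or cB // andbT; apply/eqP; lra.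
exists (Num.min c (b / 2)) => [|r r0]; first by rewrite lt_min c_gt0 divr_gt0.
rewrite le_min => /andP[rc rb]; rewrite inE negb_or cB // andbT.
by apply/eqP; lra.
Qed.

Section TwoEigenvalues.
Context {R : realFieldType} {n1 n2 : nat} {l1 l2 : R}.
Hypotheses (n1_gt0 : (0 < n1)%N) (n2_gt0 : (0 < n2)%N) (l1_neq_l2 : l1 != l2).

Let n1_neq0 : n1%:R != 0 :> R. Proof. by rewrite pnatr_eq0 -lt0n. Qed.
Let n2_neq0 : n2%:R != 0 :> R. Proof. by rewrite pnatr_eq0 -lt0n. Qed.
Let l2_sub_l1_neq0 : l2 - l1 != 0. Proof. by rewrite subr_eq0 eq_sym. Qed.
Let l1_sub_l2_neq0 : l1 - l2 != 0. Proof. by rewrite subr_eq0. Qed.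

Definition blockrow (a b : R) : 'rV[R]_(n1 + n2) := row_mx (const_mx a) (const_mx b).

Lemma blockrowEl a b i : blockrow a b 0 (lshift n2 i) = a.
Proof. by rewrite row_mxEl mxE. Qed.

Lemma blockrowEr a b i : blockrow a b 0 (rshift n1 i) = b.
Proof. by rewrite row_mxEr mxE. Qed.

Definition two_eigen_mx (t : R) : 'M[R]_(n1 + n2) :=
  householder (blockrow 1 t) *m diag_mx (blockrow l1 l2) *m householder (blockrow 1 t).

Section FixedParameter.
Variable t : R.
Let w := blockrow 1 t.
Let d := blockrow l1 l2.
Let s := n1%:R + n2%:R * t ^+ 2.
Let sigma := n1%:R * l1 + n2%:R * t ^+ 2 * l2.

Lemma weight_norm : (w *m w^T) 0 0 = s.
Proof.
rewrite mxE (sum_split_const _ 1 (t ^+ 2)) ?mulr1 // => i;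
  by rewrite [_^T _ _]mxE ?blockrowEl ?blockrowEr ?mulr1 ?expr2.
Qed.

Lemma weight_norm_gt0 : 0 < s.
Proof.
have : 0 <= n2%:R * t ^+ 2 :> R by rewrite mulr_ge0 ?ler0n ?sqr_ge0.
have : 1 <= n1%:R :> R by rewrite ler1n.
rewrite /s; lra.
Qed.

Let s_neq0 : s != 0. Proof. exact: lt0r_neq0 weight_norm_gt0. Qed.

Let householderK_weight : householder w *m householder w = 1%:M.
Proof. by rewrite householderK ?weight_norm. Qed.

Lemma tr_two_eigen_mx : (two_eigen_mx t)^T = two_eigen_mx t.
Proof. by rewrite !trmx_mul tr_diag_mx tr_householder mulmxA. Qed.

Lemma char_poly_two_eigen_mx :
  char_poly (two_eigen_mx t) = ('X - l1%:P) ^+ n1 * ('X - l2%:P) ^+ n2.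
Proof.
rewrite char_poly_conj // char_poly_trig ?diag_mx_is_trig // big_split_ord /=.
under eq_bigr do rewrite mxE eqxx mulr1n blockrowEl.
under [X in _ * X]eq_bigr do rewrite mxE eqxx mulr1n blockrowEr.
by rewrite !prodr_const !card_ord.
Qed.

Lemma two_eigen_mx_quadratic :
  two_eigen_mx t *m two_eigen_mx t = (l1 + l2) *: two_eigen_mx t - (l1 * l2)%:M.
Proof.
apply: conj_invol_quadratic => //; apply: diag_mx_quadratic => i.
by case: (split_ordP i) => j ->; rewrite ?blockrowEl ?blockrowEr; [left | right].
Qed.

Lemma two_eigen_mxE i j :
  two_eigen_mx t i j = (i == j)%:R * d 0 i
    + w 0 i * w 0 j * (2 / s ^+ 2) * (2 * sigma - s * (d 0 i + d 0 j)).
Proof.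
rewrite /two_eigen_mx householder_conj_diagE weight_norm.
have -> : \sum_l w 0 l ^+ 2 * d 0 l = sigma.
  rewrite (sum_split_const _ l1 (t ^+ 2 * l2)) => [|k|k];
    by rewrite /sigma /w /d ?mulrA ?blockrowEl ?blockrowEr ?expr1n ?mul1r.
by rewrite -/w -/d; congr (_ + _); field.
Qed.

Lemma two_eigen_mx_diagl i :
  two_eigen_mx t (lshift n2 i) (lshift n2 i) = l1 + 4 * n2%:R * (l2 - l1) * (t / s) ^+ 2.
Proof.
by rewrite two_eigen_mxE eqxx mul1r /w /d !blockrowEl /sigma /s; field.
Qed.

Lemma two_eigen_mx_diagr i :
  two_eigen_mx t (rshift n1 i) (rshift n1 i) = l2 + 4 * n1%:R * (l1 - l2) * (t / s) ^+ 2.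
Proof.
by rewrite two_eigen_mxE eqxx mul1r /w /d !blockrowEr /sigma /s; field.
Qed.

Lemma two_eigen_mx_neq0 i j : t != 0 -> n2%:R * t ^+ 2 != n1%:R ->
  i != j -> two_eigen_mx t i j != 0.
Proof.
move=> t_neq0 n2t_neq_n1 ij; rewrite two_eigen_mxE (negPf ij) mul0r add0r.
have w_neq0 k : w 0 k != 0.
  by case: (split_ordP k) => k' ->; rewrite ?blockrowEl ?blockrowEr ?oner_neq0.
have two_neq0 : 2 != 0 :> R by rewrite pnatr_eq0.
apply: mulf_neq0; first by rewrite !mulf_neq0 ?invr_eq0 ?expf_neq0.
have mixed_neq0 : n2%:R * t ^+ 2 - n1%:R != 0 by rewrite subr_eq0.
rewrite /sigma /s /d.
case: (split_ordP i) => i' ->; case: (split_ordP j) => j' ->;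
  rewrite ?blockrowEl ?blockrowEr.
- have -> : 2 * (n1%:R * l1 + n2%:R * t ^+ 2 * l2) - (n1%:R + n2%:R * t ^+ 2) * (l1 + l1)
          = 2 * n2%:R * t ^+ 2 * (l2 - l1) by ring.
  by rewrite !mulf_neq0 ?expf_neq0.
- have -> : 2 * (n1%:R * l1 + n2%:R * t ^+ 2 * l2) - (n1%:R + n2%:R * t ^+ 2) * (l1 + l2)
          = (n2%:R * t ^+ 2 - n1%:R) * (l2 - l1) by ring.
  by rewrite mulf_neq0.
- have -> : 2 * (n1%:R * l1 + n2%:R * t ^+ 2 * l2) - (n1%:R + n2%:R * t ^+ 2) * (l2 + l1)
          = (n2%:R * t ^+ 2 - n1%:R) * (l2 - l1) by ring.
  by rewrite mulf_neq0.
- have -> : 2 * (n1%:R * l1 + n2%:R * t ^+ 2 * l2) - (n1%:R + n2%:R * t ^+ 2) * (l2 + l2)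
          = 2 * n1%:R * (l1 - l2) by ring.
  by rewrite !mulf_neq0.
Qed.

End FixedParameter.

Lemma exists_small_parameter {c : R} : 0 < c ->
  exists t, [/\ 0 < t, n2%:R * t ^+ 2 < n1%:R
              & (t / (n1%:R + n2%:R * t ^+ 2)) ^+ 2 <= c].
Proof.
move=> c_gt0; pose t := Num.min c (n2%:R + 1)^-1.
have n1_ge1 : 1 <= n1%:R :> R by rewrite ler1n.
have n2_ge1 : 1 <= n2%:R :> R by rewrite ler1n.
have t_gt0 : 0 < t by rewrite lt_min c_gt0 invr_gt0 ltr_wpDl.
have t_le_c : t <= c by rewrite ge_min lexx.
have n2t_le1 : (n2%:R + 1) * t <= 1.
  by rewrite -ler_pdivlMl ?ltr_wpDl // mulr1 ge_min lexx orbT.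
have s_ge1 : 1 <= n1%:R + n2%:R * t ^+ 2 by nra.
have ts_gt0 : 0 < t / (n1%:R + n2%:R * t ^+ 2) by rewrite divr_gt0 //; lra.
have ts_le_t : t / (n1%:R + n2%:R * t ^+ 2) <= t by rewrite ler_pdivrMr; nra.
exists t; split => //; first by nra.
have t_le1 : t <= 1 by nra.
by move: ts_gt0 ts_le_t; rewrite expr2; move: (t / _) => q; nra.
Qed.

Lemma two_eigen_mx_diag_notin (E : seq R) :
  exists t, [/\ t != 0, n2%:R * t ^+ 2 != n1%:R
              & forall i, two_eigen_mx t i i \notin E].
Proof.
(* The values of (t / (n1 + n2 t^2))^2 that put a diagonal entry into E. *)
pose B := [seq (x - l1) / (4 * n2%:R * (l2 - l1)) | x <- E]
       ++ [seq (x - l2) / (4 * n1%:R * (l1 - l2)) | x <- E].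
have [c c_gt0 cB] := exists_pos_notin B.
have [t [t_gt0 n2t_lt_n1 r_le_c]] := exists_small_parameter c_gt0.
exists t; split; [exact: lt0r_neq0 | by rewrite lt_eqF |].
have r_gt0 : 0 < (t / (n1%:R + n2%:R * t ^+ 2)) ^+ 2.
  by rewrite exprn_gt0 // divr_gt0 // weight_norm_gt0.
move=> i; apply: (contraNN _ (cB _ r_gt0 r_le_c)); rewrite mem_cat.
case: (split_ordP i) => k ->;
  [rewrite two_eigen_mx_diagl | rewrite two_eigen_mx_diagr] => iE;
  apply/orP; [left | right]; apply/mapP; (eexists; first exact: iE);
  by field; rewrite ?l2_sub_l1_neq0 ?l1_sub_l2_neq0 ?n1_neq0 ?n2_neq0
                    lt0r_neq0 ?weight_norm_gt0.
Qed.

End TwoEigenvalues.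

Arguments two_eigen_mx {R} n1 n2 l1 l2 t.

Theorem corollary4p4 (R : realType) (l1 l2 : R) (n1 n2 : nat)
  (F D : seq R) :
  l1 != l2 -> (0 < n1)%N -> (0 < n2)%N ->
  l1 \notin F -> l2 \notin F ->
  exists A : 'M[R]_(n1 + n2),
    [/\ SKn A,
        char_poly A = ('X - l1%:P) ^+ n1 * ('X - l2%:P) ^+ n2,
        (forall (v : 'I_(n1 + n2)) (x : R), x \in F -> ~~ eigenvalue (del_vertex A v) x)
      & (forall i : 'I_(n1 + n2), A i i \notin D)].
Proof.
move=> l12 n1_gt0 n2_gt0 l1F l2F.
have [t [t_neq0 n2t_neq_n1 diag_notin]] :=
  two_eigen_mx_diag_notin n1_gt0 n2_gt0 l12 (D ++ [seq l1 + l2 - x | x <- F]).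
exists (two_eigen_mx n1 n2 l1 l2 t); split.
- split=> [|i j]; first exact: tr_two_eigen_mx.
  exact: two_eigen_mx_neq0.
- exact: char_poly_two_eigen_mx.
- move=> v x xF; rewrite del_vertexE.
  apply/negP => /(eigenvalue_row'_col' (two_eigen_mx_quadratic n1_gt0 t)).
  case/or3P => /eqP x_eq; first by move: l1F; rewrite -x_eq xF.
    by move: l2F; rewrite -x_eq xF.
  move: (diag_notin v); rewrite mem_cat; apply/negP/negPn/orP; right.
  by apply/mapP; exists x => //; rewrite x_eq opprB addrC subrK.
- by move=> i; apply: contra (diag_notin i); rewrite mem_cat => ->.
Qed.
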